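(* Let $n\ge 1$ and $0\le k\le n$, and let $L_n$ denote the number of Latin squares of order $n$. The number of preference profiles for $n$ men and $n$ women in which the men's preferences form a Latin square and there are exactly $k$ pairs of soulmates is \[L_n \binom{n}{k} (n-1)^{n-k} (n-1)!^n\] (with the convention $0^0=1$).
   Context: A preference profile for $n$ (labeled) men and $n$ (labeled) women consists of, for each man, a strict ranking of the women (bijection to $\{1,\dots,n\}$, 1 = favorite), and for each woman, a strict ranking of the men. The men's preferences form a Latin square if the $n\times n$ matrix whose $i$-th row lists the women in man $i$'s order of preference (the entry in column $r$ being the woman he ranks $r$-th) is a Latin square, i.e. for each rank $r$ the women ranked $r$-th by the different men are all distinct. Women's preferences are unrestricted. A man and a woman are soulmates if each ranks the other first. *)

From mathcomp Require Import all_boot all_fingroup.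
Set Implicit Arguments. Unset Strict Implicit. Unset Printing Implicit Defensive.

(* n men and n women, each labeled by 'I_n; ranks are 'I_n, rank 0 = favorite.
   A ranking of man i is a permutation sending a rank r to the woman he ranks
   at position r (rank r+1 in the 1-based convention of the paper). *)
Definition prefs (n : nat) := {ffun 'I_n -> {perm 'I_n}}.

(* A preference profile: (men's rankings, women's rankings). *)
Definition profile (n : nat) := (prefs n * prefs n)%type.

(* The men's preference matrix is a Latin square: for each rank r, the women
   ranked r-th by the different men are pairwise distinct.  (Rows are
   permutations by construction.) *)
Definition latin (n : nat) (M : prefs n) : bool :=
  [forall r : 'I_n, injectiveb (fun i : 'I_n => M i r)].

Definition soulmates (n : nat) (P : profile n.+1) (i j : 'I_n.+1) : bool :=
  (P.1 i ord0 == j) && (P.2 j ord0 == i).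

Definition num_soulmate_pairs (n : nat) (P : profile n.+1) : nat :=
  #|[set ij : 'I_n.+1 * 'I_n.+1 | soulmates P ij.1 ij.2]|.

Definition latin_count (n : nat) : nat := #|[set M : prefs n | latin M]|.

From mathcomp Require Import all_boot all_fingroup.
Set Implicit Arguments. Unset Strict Implicit. Unset Printing Implicit Defensive.

(* Woman j and her favourite man P.2 j 0 are soulmates iff P.1 (P.2 j 0) 0 = j,
   so the soulmate pairs are counted by the women who "hit" this condition.
   Once the Latin square M is fixed, i |-> M i 0 is a bijection, so for each
   woman exactly (n-1)! of her n! rankings are hits; the women's rankings are
   independent, which gives a binomial count. *)

Lemma card_perm_at (T : finType) (x y : T) :
  #|[set p : {perm T} | p x == y]| = (#|T|.-1)`!.
Proof.
rewrite -(card_preimset _ (@mulIg _ (tperm x y))) -(cardsC1 x) -card_perm.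
apply: eq_card => p; rewrite !inE permM.
have -> : (tperm x y (p x) == y) = (p x == x).
  by rewrite -[X in _ == X](tpermL x y) (inj_eq (@perm_inj _ _)).
apply/eqP/idP => [px_x | /out_perm-> //]; last by rewrite !inE eqxx.
by apply/subsetP => z; rewrite !inE; apply: contraNneq => ->; rewrite px_x.
Qed.

Lemma card_const_fibers (T U : finType) (A : pred T) (B : pred (T * U)) c :
  (forall x, A x -> #|[set y | B (x, y)]| = c) ->
  #|[set p | A p.1 && B p]| = #|[set x | A x]| * c.
Proof.
move=> card_fiber; rewrite -sum1_card -sum_nat_cond_const.
rewrite (partition_big fst A) => [|p]; last by rewrite inE => /andP[].
apply: eq_bigr => x Ax; rewrite sum1dep_card -(card_fiber x Ax).
have inj_pair : injective (pair x : U -> T * U) by move=> y1 y2 [].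
rewrite -(card_imset _ inj_pair); apply: eq_card => -[x' y].
rewrite !inE /=; apply/andP/imsetP => [[/andP[_ Bp] /eqP eq_x] | [y' By' [-> ->]]].
  by exists y; rewrite ?inE -?eq_x.
by rewrite inE in By'; rewrite Ax By'.
Qed.

Section Hits.

Variables (I T : finType) (P : I -> pred T) (a : nat).
Hypothesis card_hit : forall i, #|[set x | P i x]| = a.

Definition hits (W : {ffun I -> T}) : {set I} := [set i | P i (W i)].

Lemma card_hits_eq (S : {set I}) :
  #|[set W | hits W == S]| = a ^ #|S| * (#|T| - a) ^ #|~: S|.
Proof.
have -> : [set W | hits W == S] = setXn (fun i => [set x | P i x == (i \in S)]).
  apply/setP => W; rewrite inE in_setXn; apply/eqP/forallP => [<- i | hitW].
    by rewrite !inE eqxx.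
  by apply/setP => i; have := hitW i; rewrite !inE => /eqP.
rewrite cardsXn (bigID (mem S)) /=.
rewrite (eq_bigr (fun=> a)) => [|i iS]; last first.
  by rewrite -(card_hit i); apply: eq_card => x; rewrite !inE iS eqb_id.
rewrite [X in _ * X](eq_bigr (fun=> #|T| - a)) => [|i /negbTE iS]; last first.
  rewrite -(card_hit i) -(cardsC [set x | P i x]) addKn; apply: eq_card => x.
  by rewrite !inE iS eqbF_neg.
rewrite prod_nat_const -(eq_bigl _ _ (fun i => in_setC i S)).
by rewrite prod_nat_const.
Qed.

Lemma card_ffun_hits k :
  #|[set W | #|hits W| == k]| = 'C(#|I|, k) * (a ^ k * (#|T| - a) ^ (#|I| - k)).
Proof.
rewrite -sum1_card (partition_big hits (fun S => #|S| == k)) => [|W]; last first.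
  by rewrite inE.
rewrite -card_draws -sum_nat_cond_const; apply: eq_bigr => S /eqP card_S.
rewrite sum1dep_card -[#|I|](cardsC S) card_S addKn -card_S -card_hits_eq.
by apply: eq_card => W; rewrite !inE andb_idl // => /eqP->; rewrite card_S.
Qed.

End Hits.

Lemma num_soulmate_pairsE n (P : profile n.+1) :
  num_soulmate_pairs P = #|[set j | P.1 (P.2 j ord0) ord0 == j]|.
Proof.
have inj_pair : injective (fun j => (P.2 j ord0, j)) by move=> j1 j2 [].
rewrite -(card_imset _ inj_pair) /num_soulmate_pairs.
apply: eq_card => -[i j]; rewrite inE /soulmates /=.
apply/andP/imsetP => [[/eqP Mij /eqP Wji] | [j' Mj' [-> ->]]].
  by exists j; rewrite ?inE Wji ?Mij.
by rewrite inE in Mj'; rewrite Mj' eqxx.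
Qed.

Lemma card_women_prefs m k (M : prefs m.+1) : latin M ->
  #|[set W : prefs m.+1 | num_soulmate_pairs (M, W) == k]|
    = 'C(m.+1, k) * (m`! ^ k * (m * m`!) ^ (m.+1 - k)).
Proof.
move=> /forallP /(_ ord0) /injectiveP injM.
pose hit j (p : {perm 'I_m.+1}) := M (p ord0) ord0 == j.
have card_hit j : #|[set p | hit j p]| = m`!.
  have -> : m`! = (#|'I_m.+1|.-1)`! by rewrite card_ord.
  rewrite -(card_perm_at ord0 (invF injM j)).
  by apply: eq_card => p; rewrite !inE /hit -{1}(f_invF injM j) (inj_eq injM).
have := card_ffun_hits card_hit k; rewrite card_ord card_Sn factS mulSn addKn => <-.
by apply: eq_card => W; rewrite !inE num_soulmate_pairsE.
Qed.

Theorem mainTheorem4 (m k : nat) (hk : k <= m.+1) :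
  #|[set P : profile m.+1 | latin P.1 && (num_soulmate_pairs P == k)]|
  = latin_count m.+1 * 'C(m.+1, k) * m ^ (m.+1 - k) * (m`!) ^ m.+1.
Proof.
rewrite (card_const_fibers (B := fun P => num_soulmate_pairs P == k)
          (@card_women_prefs m k)).
rewrite /latin_count expnMn -!mulnA; congr (_ * (_ * _)).
by rewrite mulnCA -expnD subnKC.
Qed.
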